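(* Let $K,T\subset\mathbb{R}^n$ be convex polytopes (containing the origin in their interiors), let $F_1,\dots,F_m$ be faces of $K$ and $G_1,\dots,G_m$ faces of $T$. Let $q=(q_1,\dots,q_m)$, $q'=(q_1',\dots,q_m')$ be closed polygonal curves with vertices on $\partial K$ and $p=(p_1,\dots,p_m)$, $p'=(p_1',\dots,p_m')$ closed polygonal curves with vertices on $\partial T$ such that for all $j$ (indices mod $m$) $$q_{j+1}-q_j\in N_T(p_j),\quad p_{j+1}-p_j\in -N_K(q_{j+1}),\quad q'_{j+1}-q'_j\in N_T(p'_j),\quad p'_{j+1}-p'_j\in -N_K(q'_{j+1}).$$ Assume that for each $j$, $q_j,q_j'\in\operatorname{relint}(F_j)$ if $F_j$ is not a vertex and $q_j,q_j'\in F_j$ if $F_j$ is a vertex, and likewise $p_j,p_j'\in\operatorname{relint}(G_j)$ if $G_j$ is not a vertex and $p_j,p'_j\in G_j$ if $G_j$ is a vertex. Then $\ell_T(q)=\ell_T(q')$.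
   Context: For a convex body $T$ (compact convex set with the origin in its interior), $T^\circ$ is its polar body and $\mu_{T^\circ}(x)=\min\{t\ge 0: x\in tT^\circ\}$ (equal to $h_T(x)=\max_{y\in T}\langle x,y\rangle$). For a convex set $C$ and $z\in\partial C$, $N_C(z)=\{v:\langle v,y-z\rangle\le 0\ \forall y\in C\}$. For a closed polygonal curve $q=(q_1,\dots,q_m)$ (indices mod $m$), $\ell_T(q)=\sum_{j=1}^m\mu_{T^\circ}(q_{j+1}-q_j)$. $\operatorname{relint}$ denotes relative interior. *)

From HB Require Import structures.
From mathcomp Require Import all_boot all_order all_algebra.
From mathcomp Require Import boolp classical_sets reals.
Set Implicit Arguments. Unset Strict Implicit. Unset Printing Implicit Defensive.
Import Order.TTheory GRing.Theory Num.Theory.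
Local Open Scope ring_scope.
Local Open Scope classical_set_scope.

Section Defs.
Variables (R : realType) (n : nat).
Local Notation vec := 'rV[R]_n.

Definition dot (u v : vec) : R := \sum_(i < n) u ord0 i * v ord0 i.

Definition interior_pt (C : set vec) (x : vec) : Prop :=
  exists2 e : R, 0 < e & forall y, dot (y - x) (y - x) < e -> C y.
Definition boundary_pt (C : set vec) (x : vec) : Prop :=
  C x /\ ~ interior_pt C x.

Definition conv_hull (k : nat) (v : 'I_k -> vec) : set vec :=
  [set x | exists w : 'I_k -> R, (forall i, 0 <= w i) /\
     \sum_(i < k) w i = 1 /\ x = \sum_(i < k) w i *: v i].

Definition polytope0 (K : set vec) : Prop :=
  (exists (k : nat) (v : 'I_k -> vec), K = conv_hull v) /\ interior_pt K 0.

Definition convex_set (C : set vec) : Prop :=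
  forall x y (t : R), C x -> C y -> 0 <= t <= 1 -> C ((1 - t) *: x + t *: y).

Definition is_face (K F : set vec) : Prop :=
  F `<=` K /\ convex_set F /\
  forall x y (t : R), K x -> K y -> 0 < t < 1 ->
    F ((1 - t) *: x + t *: y) -> F x /\ F y.

Definition is_vertex (F : set vec) : Prop := exists v, F = [set v].

Definition aff_hull (F : set vec) : set vec :=
  [set y | exists (k : nat) (c : 'I_k -> vec) (w : 'I_k -> R),
     (forall i, F (c i)) /\ \sum_(i < k) w i = 1 /\ y = \sum_(i < k) w i *: c i].
Definition relint (F : set vec) : set vec :=
  [set x | F x /\ exists2 e : R, 0 < e &
     forall y, aff_hull F y -> dot (y - x) (y - x) < e -> F y].

Definition normal_cone (C : set vec) (z : vec) : set vec :=
  [set v | forall y, C y -> dot v (y - z) <= 0].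

Definition polar (T : set vec) : set vec :=
  [set x | forall y, T y -> dot x y <= 1].
Definition gauge (C : set vec) (x : vec) : R :=
  inf [set t : R | 0 <= t /\ exists z, C z /\ x = t *: z].

Definition ellT (T : set vec) (m : nat) (q : nat -> vec) : R :=
  \sum_(j < m) gauge (polar T) (q (j.+1 %% m)%N - q j).

Definition face_cond (F : set vec) (x : vec) : Prop :=
  if `[< is_vertex F >] then F x else relint F x.

End Defs.

(* On a closed billiard trajectory the length is a sum of support values
   h_T(q_{j+1} - q_j) = <q_{j+1} - q_j, p_j>, since q_{j+1} - q_j is normal to T at p_j.
   A normal vector at a relative-interior point of a face is normal to the whole face,
   so p_j may be replaced by p'_j; the difference of the two lengths then becomes the
   telescoping sum of <q_j - q'_j, p'_j>, because p'_{j+1} - p'_j is normal to the face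
   F_{j+1} containing q_{j+1} and q'_{j+1}. *)
From HB Require Import structures.
From mathcomp Require Import all_boot all_order all_algebra.
From mathcomp Require Import boolp classical_sets reals.
From mathcomp Require Import lra.
Import Order.TTheory GRing.Theory Num.Theory.
Local Open Scope ring_scope.
Local Open Scope classical_set_scope.
Set Implicit Arguments. Unset Strict Implicit.

Section Dot.
Variables (R : realType) (n : nat).
Local Notation vec := 'rV[R]_n.

Lemma dotC (u v : vec) : dot u v = dot v u.
Proof. by apply: eq_bigr => i _; rewrite mulrC. Qed.

Lemma dotDl (u v w : vec) : dot (u + v) w = dot u w + dot v w.
Proof. by rewrite /dot -big_split; apply: eq_bigr => i _; rewrite mxE mulrDl. Qed.

Lemma dotZl a (u w : vec) : dot (a *: u) w = a * dot u w.
Proof. by rewrite /dot mulr_sumr; apply: eq_bigr => i _; rewrite mxE mulrA. Qed.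

Lemma dotNl (u w : vec) : dot (- u) w = - dot u w.
Proof. by rewrite /dot -sumrN; apply: eq_bigr => i _; rewrite mxE mulNr. Qed.

Lemma dotBl (u v w : vec) : dot (u - v) w = dot u w - dot v w.
Proof. by rewrite dotDl dotNl. Qed.

Lemma dotZr a (u w : vec) : dot w (a *: u) = a * dot w u.
Proof. by rewrite dotC dotZl dotC. Qed.

Lemma dotBr (u v w : vec) : dot w (u - v) = dot w u - dot w v.
Proof. by rewrite dotC dotBl !(dotC w). Qed.

Lemma dot0r (w : vec) : dot w 0 = 0.
Proof. by rewrite /dot big1 // => i _; rewrite mxE mulr0. Qed.

Lemma dotvv_ge0 (u : vec) : 0 <= dot u u.
Proof. by rewrite /dot sumr_ge0 // => i _; rewrite -expr2 sqr_ge0. Qed.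

End Dot.

Section Faces.
Variables (R : realType) (n : nat).
Local Notation vec := 'rV[R]_n.

Lemma aff_hull_line (F : set vec) z z' (s : R) :
  F z -> F z' -> aff_hull F (z + s *: (z - z')).
Proof.
move=> Fz Fz'.
exists 2%N, (fun i : 'I_2 => if val i == 0%N then z else z'),
  (fun i : 'I_2 => if val i == 0%N then 1 + s else - s).
split; first by move=> i; case: ifP.
rewrite !big_ord_recl !big_ord0 /= !addr0 addrK; split=> //.
by rewrite scalerDl scale1r scalerBr scaleNr addrA.
Qed.

Lemma relint_extend (F : set vec) z z' :
  relint F z -> F z' -> exists2 t : R, 0 < t & F (z + t *: (z - z')).
Proof.
move=> [Fz [e e0 Fball]] Fz'.
set D := dot (z - z') (z - z').
have D0 : 0 <= D by exact: dotvv_ge0.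
have De0 : 0 < D + e by rewrite ltr_wpDl.
(* t = e / (D + e) lies in (0, 1] and makes t^2 D < e. *)
set t := e / (D + e).
have t0 : 0 < t by rewrite divr_gt0.
have t1 : t <= 1 by rewrite ler_pdivrMr // mul1r lerDr.
have tD : t * D < e by rewrite /t mulrAC ltr_pdivrMr // mulrDr ltrDl mulr_gt0.
exists t => //; apply: Fball; first exact: aff_hull_line.
rewrite addrAC subrr add0r dotZl dotZr mulrA; apply: le_lt_trans tD.
by rewrite ler_wpM2r // ger_pMl.
Qed.

Lemma normal_cone_relint_dot (C F : set vec) z z' v :
  F `<=` C -> normal_cone C z v -> relint F z -> F z' -> dot v z' = dot v z.
Proof.
move=> FC Nv Fz Fz'.
have [t t0 Fy] := relint_extend Fz Fz'.
have := Nv _ (FC _ Fz'); rewrite dotBr => le_z'.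
have := Nv _ (FC _ Fy).
rewrite addrAC subrr add0r dotZr dotBr pmulr_rle0 // => le_z; lra.
Qed.

Lemma normal_cone_face_cond_dot (C F : set vec) z z' v :
  F `<=` C -> normal_cone C z v -> face_cond F z -> face_cond F z' ->
  dot v z' = dot v z.
Proof.
rewrite /face_cond; case: asboolP => [[w ->] | _] FC Nv Fz Fz'.
  by rewrite Fz Fz'.
exact: normal_cone_relint_dot FC Nv Fz (proj1 Fz').
Qed.

End Faces.

Section Gauge.
Variables (R : realType) (n : nat).
Local Notation vec := 'rV[R]_n.

Lemma gauge_polar_normal_cone (T : set vec) x p :
  T 0 -> T p -> normal_cone T p x -> gauge (polar T) x = dot x p.
Proof.
move=> T0 Tp Nx; rewrite /gauge; set S := [set t | _].
have hx0 : 0 <= dot x p by have := Nx 0 T0; rewrite dotBr dot0r; lra.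
have S_gt : forall t, dot x p < t -> S t.
  move=> t lt; have t0 : 0 < t by apply: le_lt_trans lt.
  split; first exact: ltW.
  exists (t^-1 *: x); split; last by rewrite scalerA mulfV ?gt_eqF // scale1r.
  move=> y Ty; rewrite dotZl ler_pdivrMl // mulr1.
  have := Nx y Ty; rewrite dotBr => h; lra.
have S_lb : lbound S (dot x p).
  move=> s [s0 [z [Pz ->]]]; rewrite dotZl -[leRHS]mulr1 ler_wpM2l //.
  exact: Pz.
have hS : has_lbound S by exists (dot x p).
apply/eqP; rewrite eq_le; apply/andP; split; last first.
  by apply: lb_le_inf => //; exists (dot x p + 1); apply: S_gt; lra.
rewrite leNgt; apply/negP => lt_inf.
have mid : dot x p < (dot x p + inf S) / 2 by lra.
have := ge_inf hS (S_gt _ mid); lra.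
Qed.

Lemma ellT_normal_cone (T : set vec) m (q p : nat -> vec) : T 0 ->
  (forall j, (j < m)%N -> T (p j) /\ normal_cone T (p j) (q (j.+1 %% m)%N - q j)) ->
  ellT T m q = \sum_(j < m) dot (q (j.+1 %% m)%N - q j) (p j).
Proof.
move=> T0 Hp; apply: eq_bigr => j _; have [Tp Np] := Hp j (ltn_ord j).
exact: gauge_polar_normal_cone.
Qed.

End Gauge.

Lemma sum_cyclic_diff (V : zmodType) (g : nat -> V) m :
  \sum_(j < m) (g (j.+1 %% m)%N - g j) = 0.
Proof.
case: m => [|k]; first by rewrite big_ord0.
rewrite sumrB big_ord_recr big_ord_recl /= modnn addrC; apply/eqP.
rewrite subr_eq0; apply/eqP; congr (_ + _).
by apply: eq_bigr => i _; rewrite modn_small //= ltnS.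
Qed.

Theorem proposition7p1 (R : realType) (n : nat) (K T : set 'rV[R]_n)
  (m : nat) (F G : nat -> set 'rV[R]_n) (q q' p p' : nat -> 'rV[R]_n) :
  polytope0 K -> polytope0 T ->
  (forall j, (j < m)%N -> is_face K (F j)) ->
  (forall j, (j < m)%N -> is_face T (G j)) ->
  (forall j, (j < m)%N -> boundary_pt K (q j) /\ boundary_pt K (q' j)) ->
  (forall j, (j < m)%N -> boundary_pt T (p j) /\ boundary_pt T (p' j)) ->
  (forall j, (j < m)%N ->
     normal_cone T (p j) (q (j.+1 %% m)%N - q j) /\
     normal_cone K (q (j.+1 %% m)%N) (- (p (j.+1 %% m)%N - p j)) /\
     normal_cone T (p' j) (q' (j.+1 %% m)%N - q' j) /\
     normal_cone K (q' (j.+1 %% m)%N) (- (p' (j.+1 %% m)%N - p' j))) ->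
  (forall j, (j < m)%N ->
     face_cond (F j) (q j) /\ face_cond (F j) (q' j) /\
     face_cond (G j) (p j) /\ face_cond (G j) (p' j)) ->
  ellT T m q = ellT T m q'.
Proof.
move=> _ [_ [e e0 Tball]] HF HG _ Hbd Hn Hc.
have T0 : T 0 by apply: Tball; rewrite subr0 dot0r.
rewrite (@ellT_normal_cone _ _ _ _ _ p) => [|//|j jm]; last first.
  by split; [case: (Hbd j jm) => -[] | case: (Hn j jm)].
rewrite (@ellT_normal_cone _ _ _ _ _ p') => [|//|j jm]; last first.
  by split; [case: (Hbd j jm) => _ [] | case: (Hn j jm) => _ [_ []]].
apply/eqP; rewrite -subr_eq0 -sumrB; apply/eqP.
rewrite -[RHS](sum_cyclic_diff (fun j => dot (q j - q' j) (p' j)) m).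
apply: eq_bigr => j _; have jm := ltn_ord j.
have sm : (j.+1 %% m < m)%N by rewrite ltn_pmod // (leq_ltn_trans _ jm).
have [Nq [_ [_ Nq']]] := Hn j jm.
have [_ [_ [Gp Gp']]] := Hc j jm.
have [Fq [Fq' _]] := Hc _ sm.
have Ep := normal_cone_face_cond_dot (proj1 (HG j jm)) Nq Gp Gp'.
have Eq := normal_cone_face_cond_dot (proj1 (HF _ sm)) Nq' Fq' Fq.
rewrite -Ep !dotBl; move: Eq; rewrite !dotNl !dotBl !(dotC (p' _)); lra.
Qed.
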